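(* Let $G=(V,E)$ be a finite simple graph with $V\neq\emptyset$ and let $w:V\to\mathbb{N}^+$ be a weight function on its vertices. Let $W=w[V]$ and $K=\alpha_w(G)$. Then $$\tilde{w}[E]\ \ge\ \frac{W^2}{K}-W .$$
   Context: For a function $f$ on a set $T$, $f[T]=\sum_{t\in T}f(t)$. For a set $F$ of edges of $G$, $\tilde{w}[F]=\sum_{uv\in F}\big(w(u)+w(v)\big)$. $\alpha_w(G)$ is the maximum of $w[I]$ over all independent sets $I\subseteq V$. *)

(* A finite simple graph is a symmetric irreflexive relation
   e on a finType T (vertex set V = T). *)
From HB Require Import structures.
From mathcomp Require Import all_boot all_order all_algebra.
Set Implicit Arguments. Unset Strict Implicit. Unset Printing Implicit Defensive.

Definition edges (T : finType) (e : rel T) : {set {set T}} :=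
  [set [set u; v] | u in T, v in T & e u v].

Definition wsum (T : finType) (w : T -> nat) (S : {set T}) : nat :=
  \sum_(x in S) w x.

Definition wtilde_edges (T : finType) (e : rel T) (w : T -> nat) : nat :=
  \sum_(f in edges e) wsum w f.

Definition independent (T : finType) (e : rel T) (I : {set T}) : bool :=
  [forall x in I, forall y in I, ~~ e x y].

Definition alpha_w (T : finType) (e : rel T) (w : T -> nat) : nat :=
  \max_(I : {set T} | independent e I) wsum w I.

(* Write d(v) for the degree of v.  The proof combines three facts.
   1. Handshake lemma: every edge uv contributes w(u)+w(v), so
      w~[E] = sum_v w(v) d(v), i.e. W + w~[E] = sum_v w(v) (d(v)+1).
   2. Weighted Caro–Wei bound: some independent set I satisfies
      F := sum_v w(v)/(d(v)+1) <= w[I] <= K.  It is proved by induction on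
      a vertex set S: some v in S has sum_{u in N[v]} w(u)/(d_S(u)+1) <= w(v)
      (the double sum of these quantities over v equals w[S]); take v into
      I and recurse on S minus the closed neighbourhood N[v].
   3. Cauchy–Schwarz in the form (sum a)^2 / (sum a/c) <= sum a c for
      a >= 0, c > 0.
   Hence W^2/K <= W^2/F <= sum_v w(v)(d(v)+1) = W + w~[E]. *)
From HB Require Import structures.
From mathcomp Require Import all_boot all_order all_algebra.
From mathcomp Require Import ring.
Import Order.TTheory GRing.Theory Num.Theory.

Set Implicit Arguments. Unset Strict Implicit.
Local Open Scope ring_scope.

(* Cauchy–Schwarz: (sum a)^2 <= (sum a/c)(sum a c), written with a quotient.
   It follows by summing (a/c)(l - c)^2 >= 0 for l = (sum a)/(sum a/c). *)
Lemma sum_sq_div_le (R : realFieldType) (I : finType) (a c : I -> R) :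
  (forall i, 0 <= a i) -> (forall i, 0 < c i) -> 0 < \sum_i a i / c i ->
  (\sum_i a i) ^+ 2 / (\sum_i a i / c i) <= \sum_i a i * c i.
Proof.
move=> a_ge0 c_gt0 F_gt0.
set A := \sum_i a i; set F := \sum_i a i / c i; set l := A / F.
have F_neq0 : F != 0 by rewrite gt_eqF.
have sq_ge0 : 0 <= \sum_i a i / c i * (l - c i) ^+ 2.
  by apply: sumr_ge0 => i _; rewrite mulr_ge0 ?sqr_ge0 ?divr_ge0 // ltW.
have expand i : a i / c i * (l - c i) ^+ 2 =
    l ^+ 2 * (a i / c i) - 2%:R * l * a i + a i * c i.
  by field; rewrite gt_eqF ?c_gt0.
rewrite (eq_bigr _ (fun i _ => expand i)) big_split sumrB /= in sq_ge0.
rewrite -!mulr_sumr -/A -/F in sq_ge0.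
have cross_terms : l ^+ 2 * F - 2%:R * l * A = - (A ^+ 2 / F) by rewrite /l; field.
by rewrite cross_terms addrC subr_ge0 in sq_ge0.
Qed.

Section Graph.

Variables (T : finType) (e : rel T).
Hypotheses (e_sym : symmetric e) (e_irr : irreflexive e).
Variable w : T -> nat.

Definition nbhd (S : {set T}) (v : T) : {set T} := [set u in S | e v u].

Lemma in_nbhd (S : {set T}) (v u : T) : (u \in nbhd S v) = (u \in S) && e v u.
Proof. by rewrite inE. Qed.

(* The edges containing x are the pairs {x, u} with u a neighbour of x. *)
Lemma card_edges_at (x : T) :
  #|[set f in edges e | x \in f]| = #|nbhd [set: T] x|.
Proof.
have -> : [set f in edges e | x \in f] = (fun u => [set x; u]) @: nbhd [set: T] x.
  apply/setP => f; rewrite !inE; apply/andP/imsetP.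
  - case=> /imset2P [a b _]; rewrite inE => /andP [_ eab] ->.
    case/set2P => [->|->]; first by exists b; rewrite // in_nbhd in_setT.
    by exists a; rewrite 1?setUC // in_nbhd in_setT e_sym.
  - case=> u; rewrite in_nbhd => /andP [_ exu] ->; split; last by rewrite set21.
    by apply/imset2P; exists x u; rewrite ?inE.
apply: card_in_imset => u v; rewrite !inE => _ exv eq_uv.
have : v \in [set x; u] by rewrite eq_uv set22.
by case/set2P => // vx; rewrite vx e_irr in exv.
Qed.

Lemma wtilde_edgesE :
  wtilde_edges e w = (\sum_x w x * #|nbhd [set: T] x|)%N.
Proof.
rewrite /wtilde_edges /wsum.
under eq_bigr => f _ do rewrite (big_mkcond (fun x => x \in f)) /=.
rewrite exchange_big /=; apply: eq_bigr => x _.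
rewrite -big_mkcondr sum_nat_const mulnC -card_edges_at.
by congr (_ * _); apply: eq_card => f; rewrite inE.
Qed.

Lemma independentU1 (v : T) (I : {set T}) :
  independent e I -> (forall y, y \in I -> ~~ e v y) -> independent e (v |: I).
Proof.
move=> /forallP indI nadj; apply/forallP => x; apply/implyP.
rewrite in_setU1 => /orP [/eqP ->|xI]; apply/forallP => y; apply/implyP;
  rewrite in_setU1 => /orP [/eqP ->|yI].
- by rewrite e_irr.
- exact: nadj.
- by rewrite e_sym nadj.
- by move: (indI x); rewrite xI => /forallP /(_ y); rewrite yI.
Qed.

Variable R : realFieldType.

Definition cw_share (S : {set T}) (u : T) : R :=
  (w u)%:R / (#|nbhd S u|.+1)%:R.

Definition cw_bound (S : {set T}) : R := \sum_(u in S) cw_share S u.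

Lemma cw_share_sub (S S' : {set T}) (u : T) :
  S' \subset S -> cw_share S u <= cw_share S' u.
Proof.
move=> sub; rewrite /cw_share ler_pdivrMr ?ltr0n // mulrAC ler_pdivlMr ?ltr0n //.
rewrite ler_wpM2l ?ler0n // ler_nat ltnS; apply: subset_leq_card.
by apply/subsetP => x; rewrite !inE => /andP [xS ->]; rewrite (subsetP sub).
Qed.

(* Each u in S lies in exactly d_S(u)+1 closed neighbourhoods v |: N_S(v),
   so summing the shares of closed neighbourhoods over v gives back w[S]. *)
Lemma sum_closed_nbhd_shares (S : {set T}) :
  \sum_(v in S) \sum_(u in v |: nbhd S v) cw_share S u = \sum_(v in S) (w v)%:R.
Proof.
have restrict v : v \in S -> \sum_(u in v |: nbhd S v) cw_share S u =
    \sum_(u in S) (if u \in v |: nbhd S v then cw_share S u else 0).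
  move=> vS; rewrite -big_mkcondr; apply: eq_bigl => u.
  rewrite !inE; case: eqP => [->|_] /=; first by rewrite vS.
  by rewrite andbA andbb.
rewrite (eq_bigr _ restrict) exchange_big /=; apply: eq_bigr => u uS.
rewrite -big_mkcondr sumr_const.
have -> : #|[pred v | (v \in S) && (u \in v |: nbhd S v)]| = #|u |: nbhd S u|.
  apply: eq_card => v; rewrite !inE.
  case: (eqVneq v u) => [->|_]; first by rewrite uS.
  by rewrite /= uS e_sym.
rewrite cardsU1 inE e_irr andbF add1n /cw_share -(mulr_natr ((w u)%:R / _)) divfK //.
by rewrite pnatr_eq0.
Qed.

(* Averaging: a nonempty S has a vertex v whose closed neighbourhood
   carries total share at most w(v). *)
Lemma exists_light_vertex (S : {set T}) : S != set0 ->
  exists2 v, v \in S & \sum_(u in v |: nbhd S v) cw_share S u <= (w v)%:R.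
Proof.
move=> /set0Pn [v0 v0S].
pose light v := \sum_(u in v |: nbhd S v) cw_share S u <= (w v)%:R.
have [/exists_inP [v vS] | /exists_inPn heavy] := boolP [exists v in S, light v].
  by exists v.
suff : \sum_(v in S) ((w v)%:R : R) < \sum_(v in S) \sum_(u in v |: nbhd S v) cw_share S u.
  by rewrite sum_closed_nbhd_shares ltxx.
apply: ltr_sum => [|v vS]; first by apply/hasP; exists v0; rewrite ?mem_index_enum.
by rewrite ltNge heavy.
Qed.

Lemma caro_wei (S : {set T}) :
  exists I : {set T}, [/\ I \subset S, independent e I & cw_bound S <= (wsum w I)%:R].
Proof.
elim: {S}#|S| {-2}S (leqnn #|S|) => [|n IH] S.
  rewrite leqn0 cards_eq0 => /eqP ->; exists set0; split => //.
    by apply/forallP => x; rewrite inE.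
  by rewrite /cw_bound /wsum !big_set0.
have [-> _|S_neq0 cardS] := eqVneq S set0.
  exists set0; split => //; first by apply/forallP => x; rewrite inE.
  by rewrite /cw_bound /wsum !big_set0.
have [v vS light] := exists_light_vertex S_neq0.
set N := v |: nbhd S v; set S' := S :\: N.
have vN : v \in N by rewrite setU11.
have NS : N \subset S.
  by apply/subsetP => x; rewrite !inE => /orP [/eqP ->|/andP []].
have [I' [I'S' indI' boundI']] : exists I' : {set T},
    [/\ I' \subset S', independent e I' & cw_bound S' <= (wsum w I')%:R].
  apply: IH; rewrite -ltnS; apply: leq_trans cardS; apply: proper_card.
  by apply/properP; split; [exact: subsetDl | exists v => //; rewrite in_setD vN].
have I'_out x : x \in I' -> x \in S /\ x \notin N.
  by move/(subsetP I'S'); rewrite inE => /andP [].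
exists (v |: I'); split.
- apply/subsetP => x; rewrite in_setU1 => /orP [/eqP -> //|].
  by case/I'_out.
- apply: independentU1 => // y /I'_out [yS]; rewrite !inE yS.
  by case: (e v y); rewrite ?orbT.
- have vI' : v \notin I' by apply/negP => /I'_out [_]; rewrite vN.
  rewrite /wsum big_setU1 //= natrD /cw_bound (big_setID N) /=.
  rewrite (setIidPr NS); apply: lerD => //; apply: le_trans boundI'.
  by apply: ler_sum => u _; apply: cw_share_sub; exact: subsetDl.
Qed.

Lemma cw_bound_le_alpha : cw_bound [set: T] <= (alpha_w e w)%:R.
Proof.
have [I [_ indI boundI]] := caro_wei [set: T].
apply: (le_trans boundI); rewrite ler_nat; exact: leq_bigmax_cond.
Qed.

End Graph.

Arguments cw_bound {T} e w {R} S.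

Theorem theorem3p1 (T : finType) (e : rel T)
  (e_sym : symmetric e) (e_irr : irreflexive e)
  (V_nonempty : (0 < #|T|)%N)
  (w : T -> nat) (w_pos : forall x, (0 < w x)%N) :
  let W := wsum w [set: T] in
  let K := alpha_w e w in
  (W%:R ^+ 2 / K%:R - W%:R : rat) <= (wtilde_edges e w)%:R.
Proof.
cbv zeta; set W := wsum w [set: T]; set K := alpha_w e w.
set F : rat := cw_bound e w [set: T].
pose d v := #|nbhd e [set: T] v|.
have sum_setT (f : T -> rat) : \sum_(x in [set: T]) f x = \sum_x f x.
  by apply: eq_bigl => x; rewrite inE.
have WE : W%:R = \sum_v (w v)%:R :> rat by rewrite /W /wsum natr_sum sum_setT.
have FE : F = \sum_v (w v)%:R / (d v).+1%:R by rewrite /F /cw_bound sum_setT.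
have F_gt0 : 0 < F.
  have [x0 _] := card_gt0P V_nonempty.
  rewrite FE (bigD1 x0) //= ltr_pwDl ?divr_gt0 ?ltr0n //.
  by apply: sumr_ge0 => u _; rewrite divr_ge0.
have FK : F <= K%:R by exact: cw_bound_le_alpha.
have degree_sum : W%:R + (wtilde_edges e w)%:R = \sum_v (w v)%:R * (d v).+1%:R :> rat.
  rewrite (wtilde_edgesE e_sym e_irr) WE natr_sum -big_split /=.
  by apply: eq_bigr => v _; rewrite -natrD -natrM mulnS.
have CS : W%:R ^+ 2 / F <= \sum_v (w v)%:R * (d v).+1%:R.
  by rewrite WE FE; apply: sum_sq_div_le => [v|v|]; rewrite ?ler0n ?ltr0Sn // -FE.
rewrite lerBlDl degree_sum; apply: le_trans CS.
by rewrite ler_wpM2l ?sqr_ge0 // lef_pV2 ?posrE // (lt_le_trans F_gt0).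
Qed.
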